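(* Let $(G,\cdot,\curlywedge,\xi,\delta)$ satisfy the standing assumptions below. A non-empty subset $H\subseteq G$ is $f_\xi$-closed if and only if for all $x,y,g_1,g_2\in G$: (i) $xy\in H\Rightarrow x\in H$; (ii) $g_1\vdash g_2\wedge g_1\in H\Rightarrow g_1g_2\in H$; (iii) $g_1\curlywedge g_2=g_1\in H\Rightarrow g_2\in H$; (iv) $g_1\downarrow g_2\wedge g_1\in H\wedge g_2x\in H\Rightarrow (g_1\curlywedge g_2)x\in H$, where in (iv) $x$ may also be the empty symbol (i.e. (iv) also holds with $x$ deleted).
   Context: Standing assumptions: $(G,\cdot)$ is a semigroup, $(G,\curlywedge)$ a semilattice on $G$, $\xi,\delta\subseteq G\times G$. Write $x\leqslant y$ iff $x\curlywedge y=x$ (semilattice order $\zeta$), $x\downarrow y$ iff $(x,y)\in\xi$, $x\vdash y$ iff $(x,y)\in\delta$. Assume $\xi$ is left regular ($(u,v)\in\xi\Rightarrow(xu,xv)\in\xi$), $\zeta\subseteq\xi$, $\delta$ is a left ideal ($(x,y)\in\delta\Rightarrow(ux,y)\in\delta$), and for all $x,y,z,u,v\in G$: $x(y\curlywedge z)=xy\curlywedge xz$; $x\leqslant y\wedge u\leqslant v\wedge y\downarrow v\Rightarrow u\downarrow x$; $x\downarrow y\Rightarrow(x\curlywedge y)u=xu\curlywedge yu$. $G^*=G\cup\{e\}$ is $(G,\cdot)$ with a new identity $e$ adjoined, with conventions $e\leqslant e$, $e\vdash e$, $x\vdash e$ for all $x\in G$. $a\boxdot b\leqslant c$ abbreviates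 $a\vdash b\wedge ab\leqslant c$. A subset $H\subseteq G$ is $f_\xi$-closed if for all $x,y,t\in G^*$ and $z,u,v\in G$: $u\downarrow v\wedge(u\curlywedge v)x\boxdot y\leqslant zt\wedge u\in H\wedge vx\in H\Rightarrow z\in H$. *)

(* Standing assumptions on (G, mul, meet, xi, delta).
   le x y  :=  meet x y = x   (the semilattice order zeta)
   xi x y  is  x ↓ y ;  delta x y  is  x ⊢ y. *)
Definition sle {G : Type} (meet : G -> G -> G) (x y : G) : Prop := meet x y = x.

Record standing {G : Type} (mul meet : G -> G -> G) (xi delta : G -> G -> Prop)
  : Prop := {
  st_mul_assoc : forall x y z, mul x (mul y z) = mul (mul x y) z;
  st_meet_idem : forall x, meet x x = x;
  st_meet_comm : forall x y, meet x y = meet y x;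
  st_meet_assoc : forall x y z, meet x (meet y z) = meet (meet x y) z;
  st_xi_left_regular : forall x u v, xi u v -> xi (mul x u) (mul x v);
  st_zeta_sub_xi : forall x y, sle meet x y -> xi x y;
  st_delta_left_ideal : forall u x y, delta x y -> delta (mul u x) y;
  st_left_distr : forall x y z, mul x (meet y z) = meet (mul x y) (mul x z);
  st_order_xi : forall x y u v,
      sle meet x y -> sle meet u v -> xi y v -> xi u x;
  st_right_distr_xi : forall x y u,
      xi x y -> mul (meet x y) u = meet (mul x u) (mul y u)
}.

(* G* = G ∪ {e}, represented as option G with None = e (new identity). *)
Definition mulS {G : Type} (mul : G -> G -> G) (a b : option G) : option G :=
  match a, b with
  | None, _ => b
  | _, None => a
  | Some x, Some y => Some (mul x y)
  end.

Definition leS {G : Type} (meet : G -> G -> G) (a b : option G) : Prop :=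
  match a, b with
  | None, None => True
  | Some x, Some y => sle meet x y
  | _, _ => False
  end.

Definition vdashS {G : Type} (delta : G -> G -> Prop) (a b : option G) : Prop :=
  match a, b with
  | _, None => True
  | None, Some _ => False
  | Some x, Some y => delta x y
  end.

Definition boxdot_le {G : Type} (mul meet : G -> G -> G) (delta : G -> G -> Prop)
  (a b c : option G) : Prop :=
  vdashS delta a b /\ leS meet (mulS mul a b) c.

Definition f_xi_closed {G : Type} (mul meet : G -> G -> G) (xi delta : G -> G -> Prop)
  (H : G -> Prop) : Prop :=
  forall (x y t : option G) (z u v : G),
    xi u v ->
    boxdot_le mul meet delta (mulS mul (Some (meet u v)) x) y
              (mulS mul (Some z) t) ->
    H u ->
    (match mulS mul (Some v) x with Some w => H w | None => False end) ->
    H z.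


(* Necessity: each of (i)-(v) is an instance of f_xi-closedness in which the
   adjoined identity e fills the unused slots and xi is applied to (g, g) or
   to the given pair.  Sufficiency: if u and vx lie in H, so does (u ⋏ v)x by
   (iv)/(v); then ⊢ moves it to (u ⋏ v)xy by (ii), the order moves it up to
   zt by (iii), and (i) strips t. *)

Definition inS {G : Type} (H : G -> Prop) (a : option G) : Prop :=
  match a with Some w => H w | None => False end.

Lemma standing_xi_refl (G : Type) (mul meet : G -> G -> G) (xi delta : G -> G -> Prop) :
  standing mul meet xi delta -> forall a, xi a a.
Proof.
  intros Hst a. apply (st_zeta_sub_xi _ _ _ _ Hst). apply (st_meet_idem _ _ _ _ Hst).
Qed.

Section Necessity.

Variables (G : Type) (mul meet : G -> G -> G) (xi delta : G -> G -> Prop) (H : G -> Prop).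
Hypothesis meet_idem : forall x, meet x x = x.
Hypothesis xi_refl : forall a, xi a a.
Hypothesis closedH : f_xi_closed mul meet xi delta H.

Lemma f_xi_closed_prefix (x y : G) : H (mul x y) -> H x.
Proof.
  intro Hxy.
  apply (closedH None None (Some y) x (mul x y) (mul x y) (xi_refl _)); simpl; auto.
  split; simpl; auto. unfold sle. rewrite !meet_idem. reflexivity.
Qed.

Lemma f_xi_closed_vdash (g1 g2 : G) : delta g1 g2 -> H g1 -> H (mul g1 g2).
Proof.
  intros Hd Hg.
  apply (closedH None (Some g2) None (mul g1 g2) g1 g1 (xi_refl _)); simpl; auto.
  split; simpl; rewrite meet_idem; auto. apply meet_idem.
Qed.

Lemma f_xi_closed_upward (g1 g2 : G) : meet g1 g2 = g1 -> H g1 -> H g2.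
Proof.
  intros Hle Hg.
  apply (closedH None None None g2 g1 g1 (xi_refl _)); simpl; auto.
  split; simpl; auto. rewrite meet_idem. exact Hle.
Qed.

Lemma f_xi_closed_meet_mulr (g1 g2 x : G) :
  xi g1 g2 -> H g1 -> H (mul g2 x) -> H (mul (meet g1 g2) x).
Proof.
  intros Hxi H1 H2.
  apply (closedH (Some x) None None _ g1 g2 Hxi); simpl; auto.
  split; simpl; auto. apply meet_idem.
Qed.

Lemma f_xi_closed_meet (g1 g2 : G) : xi g1 g2 -> H g1 -> H g2 -> H (meet g1 g2).
Proof.
  intros Hxi H1 H2.
  apply (closedH None None None _ g1 g2 Hxi); simpl; auto.
  split; simpl; auto. apply meet_idem.
Qed.

End Necessity.

Section Sufficiency.

Variables (G : Type) (mul meet : G -> G -> G) (xi delta : G -> G -> Prop) (H : G -> Prop).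
Hypothesis H_prefix : forall x y, H (mul x y) -> H x.
Hypothesis H_vdash : forall g1 g2, delta g1 g2 -> H g1 -> H (mul g1 g2).
Hypothesis H_upward : forall g1 g2, meet g1 g2 = g1 -> H g1 -> H g2.
Hypothesis H_meet_mulr :
  forall g1 g2 x, xi g1 g2 -> H g1 -> H (mul g2 x) -> H (mul (meet g1 g2) x).
Hypothesis H_meet : forall g1 g2, xi g1 g2 -> H g1 -> H g2 -> H (meet g1 g2).

Lemma inS_mulS_meet (u v : G) (x : option G) :
  xi u v -> H u -> inS H (mulS mul (Some v) x) -> inS H (mulS mul (Some (meet u v)) x).
Proof. destruct x; simpl; auto. Qed.

Lemma inS_mulS_vdash (a b : option G) :
  vdashS delta a b -> inS H a -> inS H (mulS mul a b).
Proof. destruct a, b; simpl; auto; contradiction. Qed.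

Lemma inS_leS (a b : option G) : leS meet a b -> inS H a -> inS H b.
Proof. destruct a, b; simpl; try contradiction. apply H_upward. Qed.

Lemma inS_mulS_prefix (z : G) (t : option G) : inS H (mulS mul (Some z) t) -> H z.
Proof. destruct t; simpl; auto. apply H_prefix. Qed.

Lemma f_xi_closed_of_conditions : f_xi_closed mul meet xi delta H.
Proof.
  intros x y t z u v Hxi [Hd Hle] Hu Hv.
  apply (inS_mulS_prefix z t), (inS_leS _ _ Hle), (inS_mulS_vdash _ _ Hd).
  exact (inS_mulS_meet u v x Hxi Hu Hv).
Qed.

End Sufficiency.

Theorem proposition4 (G : Type) (mul meet : G -> G -> G) (xi delta : G -> G -> Prop)
  (Hst : standing mul meet xi delta) (H : G -> Prop) (Hne : exists h, H h) :
  f_xi_closed mul meet xi delta H <->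
  ((forall x y : G, H (mul x y) -> H x) /\
   (forall g1 g2 : G, delta g1 g2 -> H g1 -> H (mul g1 g2)) /\
   (forall g1 g2 : G, meet g1 g2 = g1 -> H g1 -> H g2) /\
   (forall g1 g2 x : G, xi g1 g2 -> H g1 -> H (mul g2 x) -> H (mul (meet g1 g2) x)) /\
   (forall g1 g2 : G, xi g1 g2 -> H g1 -> H g2 -> H (meet g1 g2))).
Proof.
  pose proof (st_meet_idem _ _ _ _ Hst) as idem.
  pose proof (standing_xi_refl _ _ _ _ _ Hst) as xi_refl.
  split.
  - intro closedH.
    split; [|split; [|split; [|split]]].
    + exact (f_xi_closed_prefix _ _ _ _ _ _ idem xi_refl closedH).
    + exact (f_xi_closed_vdash _ _ _ _ _ _ idem xi_refl closedH).
    + exact (f_xi_closed_upward _ _ _ _ _ _ idem xi_refl closedH).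
    + exact (f_xi_closed_meet_mulr _ _ _ _ _ _ idem closedH).
    + exact (f_xi_closed_meet _ _ _ _ _ _ idem closedH).
  - intros [C1 [C2 [C3 [C4 C5]]]].
    exact (f_xi_closed_of_conditions _ _ _ _ _ _ C1 C2 C3 C4 C5).
Qed.
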